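(* There exist constants $C>0$, $\delta_0\in(0,\tfrac18)$ and $\epsilon_0>0$ such that the following holds for all integers $n\ge2$ and $m\ge1$, every $\epsilon\in(0,\epsilon_0)$, and every forecasting competition mechanism $M$: if for every belief matrix $P\in[0,1]^{n\times m}$ and every ground truth $\vec\theta\in[0,1]^m$, with truthful reports $R=P$, the forecaster $i\sim M(P,\vec y)$ (with $\vec y\sim\vec\theta$) is $\epsilon$-optimal with probability at least $1-\delta_0$, then $m\ge\frac{C\ln n}{\epsilon^2}$. That is, the nonstrategic event complexity of every mechanism is $\Omega(\log(n)/\epsilon^2)$.
   Context: A forecasting competition mechanism is a map $M:[0,1]^{n\times m}\times\{0,1\}^m\to\Delta_n$ (reports and realized outcomes to a distribution over the $n$ forecasters). Events are independent with $\Pr[y_t=1]=\theta_t$. Accuracy of forecaster $i$ with beliefs $p_i$: $a_i=1-\frac1m\sum_t(p_{it}-\theta_t)^2$; $i$ is $\epsilon$-optimal if $a_i\ge\max_ja_j-\epsilon$. *)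

From HB Require Import structures.
From mathcomp Require Import all_boot all_order all_algebra.
From mathcomp Require Import all_classical all_reals all_analysis.
Set Implicit Arguments. Unset Strict Implicit. Unset Printing Implicit Defensive.
Import Order.TTheory GRing.Theory Num.Theory.
Local Open Scope ring_scope.

Section Forecast.
Variable R : realType.

(* A mechanism maps a report matrix (n forecasters x m events) and realized
   outcomes y in {0,1}^m to a vector of weights over the n forecasters. *)
Definition mechanism (n m : nat) :=
  'M[R]_(n, m) -> {ffun 'I_m -> bool} -> {ffun 'I_n -> R}.

Definition in01 (x : R) : bool := (0 <= x) && (x <= 1).

Definition matrix01 n m (P : 'M[R]_(n, m)) : Prop := forall i j, in01 (P i j).
Definition vec01 m (theta : 'I_m -> R) : Prop := forall t, in01 (theta t).

Definition is_mechanism n m (M : mechanism n m) : Prop :=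
  forall P y, matrix01 P ->
    (forall i, 0 <= M P y i) /\ \sum_(i < n) M P y i = 1.

Definition accuracy n m (P : 'M[R]_(n, m)) (theta : 'I_m -> R) (i : 'I_n) : R :=
  1 - (m%:R)^-1 * \sum_(t < m) (P i t - theta t) ^+ 2.

Definition eps_optimal n m (P : 'M[R]_(n, m)) (theta : 'I_m -> R) (eps : R)
  (i : 'I_n) : bool :=
  [forall j : 'I_n, accuracy P theta j - eps <= accuracy P theta i].

Definition outcome_prob m (theta : 'I_m -> R) (y : {ffun 'I_m -> bool}) : R :=
  \prod_(t < m) (if y t then theta t else 1 - theta t).

(* Pr_{y ~ theta, i ~ M(P, y)} [ i is eps-optimal ] with truthful reports R = P *)
Definition success_prob n m (M : mechanism n m) (P : 'M[R]_(n, m))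
  (theta : 'I_m -> R) (eps : R) : R :=
  \sum_(y : {ffun 'I_m -> bool})
    outcome_prob theta y * \sum_(i < n | eps_optimal P theta eps i) M P y i.

End Forecast.

From HB Require Import structures.
From mathcomp Require Import all_boot all_order all_algebra.
From mathcomp Require Import all_classical all_reals all_analysis.
From mathcomp Require Import ring lra.
Set Implicit Arguments.
Unset Strict Implicit.
Unset Printing Implicit Defensive.
Import Order.TTheory GRing.Theory Num.Theory.
Local Open Scope ring_scope.

(* Proof idea (Le Cam's two-point method on a hypercube of instances).
   Write 2^K <= n < 2^(K+1) and split the m events into K residue blocks of
   size about m/K.  Forecasters 0 .. 2^K - 1 enumerate all sign patterns
   sg in {0,1}^K and believe each event of block j with certainty 0 or 1
   according to their pattern; the ground truth for a hidden pattern sg puts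
   probability 1/2 +- 2 eps on the events of block j.  Accuracy is affine in
   the number of events a forecaster leans the right way on, so an
   eps-optimal forecaster is right on 3/4 of the events; a mechanism that
   succeeds with probability 15/16 therefore puts large expected weight on
   correct forecasters.  On the other hand, reversing the sign of one block
   of size << 1/eps^2 changes the outcome law by little in total variation
   (bounded through the chi-square divergence, which tensorizes), so on
   average over the patterns this weight is at most 5/8 per event: a
   contradiction unless m >= C (ln n) / eps^2. *)
Section Distances.
Variables (R : realFieldType) (T : finType).
Implicit Types (f g : T -> R).

(* AM-GM: a deviation is controlled by its relative square, for any lam > 0. *)
Lemma abs_le_sq_div (a b lam : R) : 0 < b -> 0 < lam ->
  `|a - b| <= (a - b) ^+ 2 / (4 * lam * b) + lam * b.
Proof.
move=> hb hlam; have hc : 0 < 4 * lam * b by rewrite !mulr_gt0.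
rewrite -(ler_pM2r hc); set c := 4 * lam * b.
rewrite mulrDl divfK ?gt_eqF // -[(a - b) ^+ 2]real_normK ?num_real // /c.
have := sqr_ge0 (`|a - b| - 2 * lam * b); nra.
Qed.

Lemma l1_le_chi2 f g (lam : R) : (forall x, 0 < g x) -> 0 < lam ->
  \sum_x f x = 1 -> \sum_x g x = 1 ->
  \sum_x `|f x - g x| <= (\sum_x f x ^+ 2 / g x - 1) / (4 * lam) + lam.
Proof.
move=> hg hlam hf1 hg1.
apply: (@le_trans _ _
  (\sum_x ((f x - g x) ^+ 2 / (4 * lam * g x) + lam * g x))).
  by apply: ler_sum => x _; exact: abs_le_sq_div.
have split_term x : (f x - g x) ^+ 2 / (4 * lam * g x) + lam * g x =
    (f x ^+ 2 / g x - 2 * f x + g x) / (4 * lam) + lam * g x.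
  by field; rewrite !gt_eqF.
rewrite (eq_bigr _ (fun x _ => split_term x)) big_split /= -!mulr_sumr -mulr_suml.
suff -> : \sum_x (f x ^+ 2 / g x - 2 * f x + g x) = \sum_x f x ^+ 2 / g x - 1.
  by rewrite hg1 mulr1.
by rewrite big_split sumrB /= -mulr_sumr hf1 hg1; ring.
Qed.

Lemma two_point_bound (mu mu' A : T -> R) :
  \sum_x mu' x = 1 -> (forall x, 0 <= A x <= 1) ->
  \sum_x mu x * A x + \sum_x mu' x * (1 - A x) <= 1 + \sum_x `|mu x - mu' x|.
Proof.
move=> h1 hA; rewrite -big_split /=.
apply: (@le_trans _ _ (\sum_x (mu' x + `|mu x - mu' x|))); last first.
  by rewrite big_split /= h1.
apply: ler_sum => x _; have /andP[h0 h1A] := hA x.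
have -> : mu x * A x + mu' x * (1 - A x) = mu' x + (mu x - mu' x) * A x by ring.
rewrite lerD2l; apply: le_trans (ler_norm _) _.
by rewrite normrM (ger0_norm h0) ler_piMr.
Qed.

Lemma sum_le_involution (phi : T -> T) f (c : R) : involutive phi ->
  (forall x, f x + f (phi x) <= c) -> \sum_x f x <= #|T|%:R * c / 2.
Proof.
move=> hphi hc.
have hsum : \sum_x f (phi x) = \sum_x f x.
  by rewrite [RHS](reindex_inj (can_inj hphi)).
have : \sum_x (f x + f (phi x)) <= \sum_(x : T) c by exact: ler_sum.
by rewrite big_split /= hsum sumr_const -mulr_natl; lra.
Qed.

End Distances.

Section BernoulliChi2.
Variable R : realFieldType.

Definition bern_chi2 (p q : R) : R := p ^+ 2 / q + (1 - p) ^+ 2 / (1 - q).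

Lemma pow_mul_le1 (x : R) (N : nat) : 0 <= x -> (1 + x) ^+ N * (1 - N%:R * x) <= 1.
Proof.
move=> hx; elim: N => [|N IH]; first by rewrite expr0 mul0r subr0 mulr1.
have hpow : 0 <= (1 + x) ^+ N by apply: exprn_ge0; lra.
apply: le_trans IH; rewrite exprS -mulrA mulrC -mulrA ler_wpM2l // -natr1.
have : 0 <= (N%:R : R) by []; nra.
Qed.

Lemma pow_le_linear (x : R) (N : nat) : 0 <= x -> N%:R * x <= 1 / 2 ->
  (1 + x) ^+ N <= 1 + 2 * (N%:R * x).
Proof.
move=> hx hNx; have := @pow_mul_le1 x N hx.
have hpow : 0 <= (1 + x) ^+ N by apply: exprn_ge0; lra.
have hNx0 : 0 <= N%:R * x by apply: mulr_ge0.
set p := (1 + x) ^+ N in hpow *; set u := N%:R * x in hNx hNx0 *.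
have : 0 <= u * (1 / 2 - u) by apply: mulr_ge0; lra.
have : 0 <= p * u by apply: mulr_ge0.
nra.
Qed.

Lemma bern_chi2_opposite (s : R) : -(1 / 8) <= s <= 1 / 8 ->
  0 <= bern_chi2 (1 / 2 + s) (1 / 2 - s) <= 1 + 32 * s ^+ 2.
Proof.
move=> /andP[hs0 hs1].
have hd : 0 < 1 - 4 * s ^+ 2 by rewrite expr2; nra.
have -> : bern_chi2 (1 / 2 + s) (1 / 2 - s) = 1 + 16 * s ^+ 2 / (1 - 4 * s ^+ 2).
  rewrite /bern_chi2; field.
  by apply/and3P; split; rewrite gt_eqF //; lra.
have hq : 0 <= 16 * s ^+ 2 / (1 - 4 * s ^+ 2).
  by apply: divr_ge0; [apply: mulr_ge0; [lra | exact: sqr_ge0] | lra].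
apply/andP; split; first lra.
rewrite lerD2l ler_pdivrMr //.
have : s ^+ 2 <= 1 / 64 by rewrite expr2; nra.
have := sqr_ge0 s; nra.
Qed.

Lemma bern_chi2_same (p : R) : 0 < p < 1 -> bern_chi2 p p = 1.
Proof.
move=> /andP[hp0 hp1]; rewrite /bern_chi2 !expr2 !mulfK ?gt_eqF ?subr_gt0 //.
by rewrite addrC subrK.
Qed.

End BernoulliChi2.

Section ProductDistribution.
Variables (R : realType) (m : nat).
Implicit Types (theta q : 'I_m -> R) (y : {ffun 'I_m -> bool}).

Lemma outcome_prob_sum1 theta : \sum_y outcome_prob theta y = 1.
Proof.
rewrite /outcome_prob -(bigA_distr_bigA (fun t (b : bool) =>
  if b then theta t else 1 - theta t)) /=.
rewrite (eq_bigr (fun _ => 1)) ?prodr_const ?expr1n // => t _.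
by rewrite big_bool /= addrC subrK.
Qed.

Lemma outcome_prob_ge0 theta y : vec01 theta -> 0 <= outcome_prob theta y.
Proof.
move=> h01; apply: prodr_ge0 => t _; have /andP[h0 h1] := h01 t.
by case: (y t); rewrite ?subr_ge0.
Qed.

Lemma outcome_prob_gt0 theta y :
  (forall t, 0 < theta t < 1) -> 0 < outcome_prob theta y.
Proof.
move=> h01; apply: prodr_gt0 => t _; have /andP[h0 h1] := h01 t.
by case: (y t); rewrite ?subr_gt0.
Qed.

Lemma outcome_prob_chi2 theta q :
  \sum_y outcome_prob theta y ^+ 2 / outcome_prob q y =
  \prod_t bern_chi2 (theta t) (q t).
Proof.
transitivity (\prod_t \sum_(b : bool)
   (if b then theta t ^+ 2 / q t else (1 - theta t) ^+ 2 / (1 - q t))).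
  rewrite bigA_distr_bigA /=; apply: eq_bigr => y _.
  rewrite /outcome_prob -prodrXl -prodf_div; apply: eq_bigr => t _.
  by case: (y t).
by apply: eq_bigr => t _; rewrite big_bool.
Qed.

End ProductDistribution.

Section HardInstance.
Variables (R : realType) (n m K : nat).
Variables (blk : 'I_m -> 'I_K) (pat : 'I_n -> {ffun 'I_K -> bool}).
Implicit Types (sg : {ffun 'I_K -> bool}) (i : 'I_n) (t : 'I_m) (s : R).

Definition belief : 'M[R]_(n, m) :=
  \matrix_(i, t) (if pat i (blk t) then 1 else 0).

Definition truth s sg (t : 'I_m) : R :=
  if sg (blk t) then 1 / 2 + s else 1 / 2 - s.

Definition agree sg i t : R := if pat i (blk t) == sg (blk t) then 1 else 0.

Definition flip (j : 'I_K) sg : {ffun 'I_K -> bool} :=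
  [ffun x => if x == j then ~~ sg x else sg x].

Lemma belief01 : matrix01 belief.
Proof. by move=> i t; rewrite /in01 mxE; case: ifP; rewrite ?ler01 ?lexx. Qed.

Lemma truth01 s sg : 0 <= s <= 1 / 2 -> vec01 (truth s sg).
Proof. by move=> /andP[h0 h1] t; rewrite /in01 /truth; case: ifP; lra. Qed.

Lemma agree01 sg i t : 0 <= agree sg i t <= 1.
Proof. by rewrite /agree; case: ifP; rewrite ?ler01 ?lexx. Qed.

Lemma flipK (j : 'I_K) : involutive (flip j).
Proof.
by move=> sg; apply/ffunP => x; rewrite !ffunE; case: eqP; rewrite ?negbK.
Qed.

Lemma agree_flip sg i t : agree (flip (blk t) sg) i t = 1 - agree sg i t.
Proof.
rewrite /agree ffunE eqxx.
by case: (pat i (blk t)); case: (sg (blk t)); rewrite ?subr0 ?subrr.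
Qed.

Lemma accuracy_belief s sg i : (0 < m)%N ->
  accuracy belief (truth s sg) i =
  1 - (1 / 2 + s) ^+ 2 + 2 * s / m%:R * \sum_t agree sg i t.
Proof.
move=> hm; have hm0 : (m%:R : R) != 0 by rewrite pnatr_eq0 -lt0n.
rewrite /accuracy (eq_bigr (fun t => (1 / 2 + s) ^+ 2 - 2 * s * agree sg i t)).
  rewrite sumrB sumr_const card_ord -mulr_sumr -[X in X *+ m]mulr1 -mulrnAr.
  by field.
move=> t _; rewrite /agree /truth mxE.
by case: (pat i (blk t)); case: (sg (blk t)); rewrite /=; field.
Qed.

Hypothesis pat_surj : forall sg, exists i, pat i = sg.

(* With margin s = 2 eps, an eps-optimal forecaster is right on at least
   three quarters of the events, by comparison with the perfect forecaster. *)
Lemma eps_optimal_agree (eps : R) sg i : (0 < m)%N -> 0 < eps ->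
  eps_optimal belief (truth (2 * eps) sg) eps i ->
  3 / 4 * m%:R <= \sum_t agree sg i t.
Proof.
move=> hm he /forallP hopt; have [i0 hi0] := pat_surj sg.
have hmR : (0 : R) < m%:R by rewrite ltr0n.
have hall : \sum_t agree sg i0 t = m%:R.
  by rewrite (eq_bigr (fun _ => 1)) ?sumr_const ?card_ord // => t _; rewrite /agree hi0 eqxx.
have := hopt i0; rewrite !accuracy_belief // hall.
set S := \sum_t agree sg i t; set u := S / m%:R.
have -> : 2 * (2 * eps) / m%:R * m%:R = 4 * eps by field; rewrite gt_eqF.
have -> : 2 * (2 * eps) / m%:R * S = 4 * eps * u by rewrite /u; field; rewrite gt_eqF.
move=> hu; have hu34 : 3 / 4 <= u by nra.
by rewrite -[S](divfK (lt0r_neq0 hmR)) -/u ler_wpM2r // ltW.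
Qed.

Definition block_size t : nat := #|[pred t' : 'I_m | blk t' == blk t]|.

Lemma chi2_flip_le s sg t : -(1 / 8) <= s <= 1 / 8 ->
  \prod_t' bern_chi2 (truth s sg t') (truth s (flip (blk t) sg) t') <=
  (1 + 32 * s ^+ 2) ^+ block_size t.
Proof.
move=> hs; have /andP[hs0 hs1] := hs.
rewrite /block_size -prodr_const [X in _ <= X]big_mkcond /=.
apply: ler_prod => t' _; rewrite inE /truth ffunE.
case: eqP => [->|_]; last first.
  by rewrite bern_chi2_same ?lexx ?ler01 //; case: ifP => _; apply/andP; split; lra.
case: (sg (blk t)); first exact: bern_chi2_opposite.
have := @bern_chi2_opposite R (- s); rewrite opprK sqrrN; apply.
by apply/andP; split; lra.
Qed.

Lemma l1_flip_small (eps : R) sg t : 0 < eps <= 1 / 16 ->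
  (block_size t)%:R * eps ^+ 2 <= 1 / 4096 ->
  \sum_y `|outcome_prob (truth (2 * eps) sg) y -
           outcome_prob (truth (2 * eps) (flip (blk t) sg)) y| <= 1 / 4.
Proof.
move=> /andP[he0 he1] hN; set s := 2 * eps.
have hs : -(1 / 8) <= s <= 1 / 8 by apply/andP; split; rewrite /s; lra.
have hq t' : 0 < truth s (flip (blk t) sg) t' < 1.
  by rewrite /truth /s; case: ifP => _; apply/andP; split; lra.
have hlam : (0 : R) < 1 / 8 by lra.
apply: le_trans (l1_le_chi2 (fun y => outcome_prob_gt0 y hq) hlam
  (outcome_prob_sum1 _) (outcome_prob_sum1 _)) _.
rewrite outcome_prob_chi2.
set N := block_size t in hN *.
have hNx : N%:R * (32 * s ^+ 2) <= 1 / 32.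
  have -> : N%:R * (32 * s ^+ 2) = 128 * (N%:R * eps ^+ 2) by rewrite /s; ring.
  lra.
have hhalf : (1 / 32 : R) <= 1 / 2 by lra.
have := le_trans (chi2_flip_le sg t hs)
  (pow_le_linear (mulr_ge0 (ler0n _ 32) (sqr_ge0 s)) (le_trans hNx hhalf)).
have -> : 4 * (1 / 8) = 2^-1 :> R by lra.
by rewrite invrK; lra.
Qed.

Variable M : mechanism R n m.
Hypothesis M_simplex : is_mechanism M.

Definition correct_mass s t sg : R :=
  \sum_y outcome_prob (truth s sg) y * \sum_i M belief y i * agree sg i t.

Lemma correct_mass_total (eps : R) sg : (0 < m)%N -> 0 < eps <= 1 / 4 ->
  3 / 4 * m%:R * success_prob M belief (truth (2 * eps) sg) eps <=
  \sum_t correct_mass (2 * eps) t sg.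
Proof.
move=> hm /andP[he0 he1].
have hth : vec01 (truth (2 * eps) sg) by apply: truth01; apply/andP; split; lra.
have -> : \sum_t correct_mass (2 * eps) t sg =
    \sum_y outcome_prob (truth (2 * eps) sg) y *
      \sum_i M belief y i * \sum_t agree sg i t.
  rewrite exchange_big; apply: eq_bigr => y _; rewrite -mulr_sumr exchange_big.
  by congr (_ * _); apply: eq_bigr => i _; rewrite mulr_sumr.
rewrite /success_prob mulr_sumr; apply: ler_sum => y _.
rewrite mulrCA ler_wpM2l ?outcome_prob_ge0 //.
have [M0 _] := M_simplex y belief01.
rewrite mulr_sumr [X in _ <= X](bigID (eps_optimal belief (truth (2 * eps) sg) eps)) /=.
rewrite -[X in X <= _]addr0 lerD //.
  apply: ler_sum => i hi; rewrite mulrC ler_wpM2l //.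
  exact: eps_optimal_agree hi.
apply: sumr_ge0 => i _; rewrite mulr_ge0 // sumr_ge0 // => t _.
by have /andP[] := agree01 sg i t.
Qed.

(* Le Cam's argument on the pair (sg, sg flipped on the block of t): M cannot
   be right about t under both patterns unless they are far apart. *)
Lemma correct_mass_flip s t sg :
  correct_mass s t sg + correct_mass s t (flip (blk t) sg) <=
  1 + \sum_y `|outcome_prob (truth s sg) y -
               outcome_prob (truth s (flip (blk t) sg)) y|.
Proof.
set A := fun y => \sum_i M belief y i * agree sg i t.
have M0 y i : 0 <= M belief y i := (M_simplex y belief01).1 i.
have M1 y : \sum_i M belief y i = 1 := (M_simplex y belief01).2.
have hflip y : \sum_i M belief y i * agree (flip (blk t) sg) i t = 1 - A y.
  rewrite -(M1 y) /A -sumrB; apply: eq_bigr => i _.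
  by rewrite agree_flip mulrBr mulr1.
rewrite /correct_mass (eq_bigr _ (fun y _ => congr1 _ (hflip y))).
apply: two_point_bound; first exact: outcome_prob_sum1.
move=> y; apply/andP; split.
  by apply: sumr_ge0 => i _; have /andP[? _] := agree01 sg i t; exact: mulr_ge0.
rewrite -(M1 y); apply: ler_sum => i _; have /andP[_ ?] := agree01 sg i t.
exact: ler_piMr.
Qed.

(* Averaging over the
   2^K patterns, the success of M gives a correct mass at least
   (3/4)(15/16) m per pattern, while flipping pairs caps it at (5/8) m. *)
Lemma hard_instance_fails (eps : R) : (0 < m)%N -> 0 < eps <= 1 / 16 ->
  (forall t, (block_size t)%:R * eps ^+ 2 <= 1 / 4096) ->
  ~ (forall sg, 15 / 16 <= success_prob M belief (truth (2 * eps) sg) eps).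
Proof.
move=> hm heps hsmall hsucc; have /andP[he0 he1] := heps.
have hmR : (0 : R) < m%:R by rewrite ltr0n.
have lower sg : 3 / 4 * m%:R * (15 / 16) <= \sum_t correct_mass (2 * eps) t sg.
  apply: le_trans (correct_mass_total sg hm _); last by apply/andP; split; lra.
  by rewrite ler_wpM2l // mulr_ge0 // ltW.
have upper t : \sum_sg correct_mass (2 * eps) t sg <=
    #|{ffun 'I_K -> bool}|%:R * (5 / 4) / 2.
  apply: sum_le_involution (flipK (blk t)) _ => sg.
  apply: le_trans (correct_mass_flip _ t sg) _.
  have := l1_flip_small sg heps (hsmall t); lra.
have : \sum_(sg : {ffun 'I_K -> bool}) (3 / 4 * m%:R * (15 / 16) : R) <=
       \sum_(t : 'I_m) (#|{ffun 'I_K -> bool}|%:R * (5 / 4) / 2 : R).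
  apply: (@le_trans _ _ (\sum_sg \sum_t correct_mass (2 * eps) t sg)).
    by apply: ler_sum => sg _; exact: lower.
  by rewrite exchange_big; apply: ler_sum => t _; exact: upper.
have hc : (0 : R) < #|{ffun 'I_K -> bool}|%:R.
  by rewrite ltr0n; apply/card_gt0P; exists [ffun => false].
have sum_const (T : finType) (x : R) : \sum_(i : T) x = x * #|T|%:R.
  by rewrite sumr_const mulr_natr.
rewrite !sum_const card_ord; set c := #|_|%:R.
have -> : 3 / 4 * m%:R * (15 / 16) * c = 45 / 64 * (m%:R * c) by field.
have -> : c * (5 / 4) / 2 * m%:R = 5 / 8 * (m%:R * c) by field.
have := mulr_gt0 hmR hc; lra.
Qed.

End HardInstance.

Definition residue_block (k m : nat) (t : 'I_m) : 'I_k.+1 :=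
  Ordinal (ltn_pmod t (ltn0Sn k)).

Lemma residue_block_card (k m : nat) (j : 'I_k.+1) :
  (#|[pred t : 'I_m | residue_block k t == j]| * k.+1 <= m + k.+1)%N.
Proof.
set A := [pred t : 'I_m | residue_block k t == j].
pose quot (t : 'I_m) : 'I_(m %/ k.+1).+1 := inord (t %/ k.+1).
have quot_lt (t : 'I_m) : (t %/ k.+1 < (m %/ k.+1).+1)%N.
  by rewrite ltnS leq_div2r // ltnW.
have quot_inj : {in A &, injective quot}.
  move=> t1 t2; rewrite !inE => /eqP h1 /eqP h2 /(congr1 val).
  rewrite /= !inordK // => hq.
  have hr : (t1 %% k.+1 = t2 %% k.+1)%N.
    by move: (congr1 val h1) (congr1 val h2) => /= -> ->.
  by apply: val_inj; rewrite /= (divn_eq t1 k.+1) (divn_eq t2 k.+1) hq hr.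
have hA : (#|A| <= (m %/ k.+1).+1)%N.
  by rewrite -(card_in_imset quot_inj); apply: leq_trans (max_card _) _; rewrite card_ord.
apply: leq_trans (leq_mul hA (leqnn k.+1)) _.
by rewrite mulSn addnC leq_add2r leq_divM.
Qed.

Definition enum_at (T : finType) (x0 : T) (n : nat) (i : 'I_n) : T :=
  nth x0 (enum T) i.

Lemma enum_at_surj (T : finType) (x0 : T) (n : nat) : (#|T| <= n)%N ->
  forall x, exists i : 'I_n, enum_at x0 i = x.
Proof.
move=> hT x; have hi : (index x (enum T) < n)%N.
  by apply: leq_trans hT; rewrite cardE index_mem mem_enum.
by exists (Ordinal hi); rewrite /enum_at /= nth_index // mem_enum.
Qed.

Lemma log2_bracket (n : nat) : (2 <= n)%N -> exists k, (2 ^ k.+1 <= n < 2 ^ k.+2)%N.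
Proof.
move=> hn; have hpos : (0 < trunc_log 2 n)%N by rewrite trunc_log_gt0.
have /= := @trunc_log_bounds 2 n isT (ltnW hn).
by exists (trunc_log 2 n).-1; rewrite prednK.
Qed.

Section Calibration.
Variable R : realType.

Lemma ln_le_pow2 (n K : nat) : (0 < n)%N -> (n < 2 ^ K)%N -> ln (n%:R : R) <= K%:R.
Proof.
move=> hn hK.
have hln2 : ln (2 : R) <= 1.
  rewrite -[X in _ <= X](expRK 1) ler_ln ?posrE ?expR_gt0 //.
  by have := expR_ge1Dx (1 : R); lra.
apply: (@le_trans _ _ (ln ((2 : R) ^+ K))).
  by rewrite ler_ln ?posrE ?ltr0n ?exprn_gt0 // -natrX ler_nat ltnW.
by rewrite lnXn // lerMn2r hln2 orbT.
Qed.

Lemma residue_block_small (k m n : nat) (eps : R) :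
  (0 < n)%N -> (n < 2 ^ k.+2)%N -> 0 < eps < 1 / 128 ->
  m%:R * eps ^+ 2 < 1 / 16384 * ln (n%:R) ->
  forall j : 'I_k.+1,
    (#|[pred t : 'I_m | residue_block k t == j]|)%:R * eps ^+ 2 <= 1 / 4096.
Proof.
move=> hn hlog /andP[he0 he1] hm j.
have hcard := residue_block_card m j; set N := #|_| in hcard *.
have hNK : N%:R * k.+1%:R <= m%:R + k.+1%:R :> R by rewrite -natrM -natrD ler_nat.
have hln : ln (n%:R : R) <= k.+2%:R := ln_le_pow2 hn hlog.
rewrite -natr1 in hln.
have hK : (1 : R) <= k.+1%:R by rewrite ler1n.
have he2 : eps ^+ 2 <= 1 / 16384 by rewrite expr2; nra.
have he20 : 0 < eps ^+ 2 by rewrite exprn_gt0.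
set e2 := eps ^+ 2 in he2 he20 hm *; set K := k.+1%:R in hNK hln hK.
have hN0 : (0 : R) <= N%:R by [].
suff : N%:R * e2 * K <= 1 / 4096 * K by rewrite ler_pM2r //; lra.
have hNe : N%:R * K * e2 <= (m%:R + K) * e2 by rewrite ler_wpM2r // ltW.
have hKe : K * e2 <= K * (1 / 16384) by rewrite ler_wpM2l //; lra.
lra.
Qed.

End Calibration.

Theorem mainTheorem11 (R : realType) :
  exists (C delta0 eps0 : R),
    0 < C /\ 0 < delta0 < 1 / 8 /\ 0 < eps0 /\
    forall (n m : nat), (2 <= n)%N -> (1 <= m)%N ->
    forall eps : R, 0 < eps < eps0 ->
    forall M : mechanism R n m, is_mechanism M ->
    (forall (P : 'M[R]_(n, m)) (theta : 'I_m -> R),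
        matrix01 P -> vec01 theta ->
        1 - delta0 <= success_prob M P theta eps) ->
    C * ln (n%:R) / eps ^+ 2 <= m%:R.
Proof.
exists (1 / 16384), (1 / 16), (1 / 128).
split; first lra.
split; first by apply/andP; split; lra.
split; first lra.
move=> n m hn hm eps heps M hM hsucc; have /andP[he0 he1] := heps.
have [k /andP[hkn hnk]] := log2_bracket hn.
rewrite leNgt; apply/negP; rewrite ltr_pdivlMr ?exprn_gt0 // => hlt.
pose pat := @enum_at {ffun 'I_k.+1 -> bool} [ffun => false] n.
apply: (@hard_instance_fails R n m k.+1 (@residue_block k m) pat _ M hM eps hm).
- apply: enum_at_surj.
  by rewrite card_ffun card_bool card_ord.
- by apply/andP; split; lra.
- move=> t; apply: residue_block_small hlt _ => //; exact: ltnW.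
- move=> sg; have htruth : 0 <= 2 * eps <= 1 / 2 by apply/andP; split; lra.
  have := hsucc _ _ (belief01 R (@residue_block k m) pat) (truth01 (@residue_block k m) sg htruth).
  lra.
Qed.
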